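(* There exists an action of the free group $F_2$ on two generators on $L_1[0,1]$ by lattice (positive) linear isometries such that there is no equivalent strictly convex norm on $L_1[0,1]$ invariant with respect to this action.
   Context: A norm $\|\cdot\|'$ is invariant with respect to the action if $\|g\cdot f\|'=\|f\|'$ for all $g\in F_2$, $f\in L_1[0,1]$; it is strictly convex if for every $x\neq y$ with $\|x\|'=\|y\|'$ one has $\|\frac{x+y}{2}\|'<\|x\|'$. *)

(* L_1[0,1] is modelled by real functions on R that are
   Lebesgue-integrable on [0,1], identified up to a.e. equality on [0,1]. *)
From HB Require Import structures.
From mathcomp Require Import all_boot all_order all_algebra.
From mathcomp Require Import all_classical all_reals all_analysis.
Set Implicit Arguments. Unset Strict Implicit. Unset Printing Implicit Defensive.
Import Order.TTheory GRing.Theory Num.Theory.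
Local Open Scope classical_set_scope.
Local Open Scope ring_scope.

Section L1.
Variable R : realType.

Definition I01 : set R := `[0%R, 1%R].

Definition inL1 (f : R -> R) : Prop :=
  (@lebesgue_measure R).-integrable I01 (EFin \o f).

Definition aeq (f g : R -> R) : Prop :=
  {ae (@lebesgue_measure R), forall x, I01 x -> f x = g x}.

Definition L1norm (f : R -> R) : R :=
  fine (\int[@lebesgue_measure R]_(x in I01) (`|f x|)%:E)%E.

Definition op := (R -> R) -> (R -> R).

Definition L1_linear (T : op) : Prop :=
  [/\ forall f, inL1 f -> inL1 (T f),
      forall f g, inL1 f -> inL1 g -> aeq f g -> aeq (T f) (T g),
      forall f g, inL1 f -> inL1 g -> aeq (T (f \+ g)) (T f \+ T g) &
      forall (a : R) f, inL1 f -> aeq (T (fun x => a * f x)) (fun x => a * T f x)].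

Definition lattice_isometry (T : op) : Prop :=
  [/\ L1_linear T,
      forall f, inL1 f -> L1norm (T f) = L1norm f &
      forall f, inL1 f -> aeq (T (fun x => `|f x|)) (fun x => `|T f x|)].

Definition L1_inverse (T S : op) : Prop :=
  (forall f, inL1 f -> aeq (S (T f)) f) /\ (forall f, inL1 f -> aeq (T (S f)) f).

End L1.

(* The free group F_2 on generators a, b: its elements are represented by words
   in the letters a, a^-1, b, b^-1. *)
Inductive letter := La | La_inv | Lb | Lb_inv.

(* An action of F_2 is given by the images of the four letters, where the
   images of a^-1, b^-1 are inverse to those of a, b; a word acts by
   composition. *)
Definition act_word (R : realType) (ops : letter -> op R) (w : seq letter)
  (f : R -> R) : R -> R := foldr (fun l g => ops l g) f w.

Definition F2_lattice_isometric_action (R : realType) (ops : letter -> op R) : Prop :=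
  [/\ forall l, lattice_isometry (ops l),
      L1_inverse (ops La) (ops La_inv) &
      L1_inverse (ops Lb) (ops Lb_inv)].

Definition equivalent_norm (R : realType) (N : (R -> R) -> R) : Prop :=
  [/\ forall f g, inL1 f -> inL1 g -> aeq f g -> N f = N g,
      forall f, inL1 f -> N f = 0 -> aeq f (fun _ => 0),
      forall (a : R) f, inL1 f -> N (fun x => a * f x) = `|a| * N f,
      forall f g, inL1 f -> inL1 g -> N (f \+ g) <= N f + N g &
      exists c C : R, [/\ 0 < c, 0 < C &
        forall f, inL1 f -> c * L1norm f <= N f /\ N f <= C * L1norm f]].

Definition strictly_convex (R : realType) (N : (R -> R) -> R) : Prop :=
  forall x y, inL1 x -> inL1 y -> ~ aeq x y -> N x = N y ->
    N (fun t => (x t + y t) / 2) < N x.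

Definition invariant_norm (R : realType) (ops : letter -> op R) (N : (R -> R) -> R) : Prop :=
  forall (w : seq letter) f, inL1 f -> N (act_word ops w f) = N f.

(* The generator a acts by the reflection f |-> f (1 - .), and b by the weighted
   composition f |-> w * (f \o s), where s is the increasing piecewise-affine
   bijection of [0,1] mapping [0,1/2) onto [0,1/4) and w is its slope. By the affine
   change of variables, such operators are positive (lattice) isometries of L_1.
   Now u := b 1 equals 1/2 on [0,1/2) and 3/2 on [1/2,1], so u and a u are distinct
   elements with the same invariant norm as 1, while their midpoint is 1 almost
   everywhere: this contradicts strict convexity. *)

From Pilot Require Import Defs.
From HB Require Import structures.
From mathcomp Require Import all_boot all_order all_algebra.
From mathcomp Require Import all_classical all_reals all_analysis.
From mathcomp Require Import measurable_realfun ring lra.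
Set Implicit Arguments. Unset Strict Implicit. Unset Printing Implicit Defensive.
Import Order.TTheory GRing.Theory Num.Theory.
Local Open Scope classical_set_scope.
Local Open Scope ring_scope.

Section AffineChangeOfVariables.
Variable R : realType.
Local Notation mu := (@lebesgue_measure R).

Definition affine (a b : R) (x : R) : R := a * x + b.

(* Stated on the carrier of Lebesgue measure, as [pushforward] requires; it also
   applies to the convertible copy of [R] with its default measurable structure. *)
Lemma measurable_affine (a b : R) :
  measurable_fun [set: measurableTypeR R] (affine a b : _ -> measurableTypeR R).
Proof. by apply: measurable_funD => //; exact: measurable_funM. Qed.

Lemma lebesgue_measure_affine_itv (a b x y : R) : a != 0 ->
  mu (affine a b @^-1` `]x, y]) = ((`|a|^-1)%:E * mu `]x, y])%E.
Proof.
rewrite neq_lt => /orP[a_lt0|a_gt0].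
- rewrite (_ : _ @^-1` _ = `[(y - b) / a, (x - b) / a[%classic); last first.
    apply/seteqP; split => z; rewrite /affine /= !in_itv /= => /andP[z1 z2];
      apply/andP; split; move: z1 z2; rewrite ?ler_ndivrMr ?ltr_ndivlMr //; nra.
  rewrite !lebesgue_measure_itv /= !lte_fin ltr_nM2r ?invr_lt0 // ltrD2r.
  case: ifPn => _; last by rewrite mule0.
  by rewrite -EFinB -EFinM ltr0_norm //; congr EFin; field; rewrite lt_eqF.
- rewrite (_ : _ @^-1` _ = `](x - b) / a, (y - b) / a]%classic); last first.
    apply/seteqP; split => z; rewrite /affine /= !in_itv /= => /andP[z1 z2];
      apply/andP; split; move: z1 z2; rewrite ?ltr_pdivrMr ?ler_pdivlMr //; nra.
  rewrite !lebesgue_measure_itv /= !lte_fin ltr_pM2r ?invr_gt0 // ltrD2r.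
  case: ifPn => _; last by rewrite mule0.
  by rewrite -EFinB -EFinM gtr0_norm //; congr EFin; field; rewrite gt_eqF.
Qed.

Lemma lebesgue_measure_affine (a b : R) (A : set R) : a != 0 -> measurable A ->
  mu (affine a b @^-1` A) = ((`|a|^-1)%:E * mu A)%E.
Proof.
move=> a0 mA.
(* The measure structure of a pushforward depends on a measurability proof, so
   it cannot be inferred and is named explicitly. *)
pose image_measure := measure_function_pushforward__canonical__measure_function_Measure
  mu (measurable_affine a b).
have -> : mu A = mscale (NngNum (normr_ge0 a)) image_measure A.
  apply: lebesgue_measure_unique mA => _ [[x y] _ <-].
  change (mu `]x, y] = `|a|%:E * mu (affine a b @^-1` `]x, y]))%E.
  rewrite lebesgue_measure_affine_itv //.
  by rewrite muleA -EFinM mulfV ?normr_eq0 // mul1e.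
change (mu (affine a b @^-1` A) = `|a|^-1%:E * (`|a|%:E * mu (affine a b @^-1` A)))%E.
by rewrite muleA -EFinM mulVf ?normr_eq0 // mul1e.
Qed.

Lemma measurable_affine_preimage (a b : R) (D : set R) : measurable D ->
  measurable (affine a b @^-1` D).
Proof. by move=> mD; rewrite -[X in measurable X]setTI; exact: measurable_affine. Qed.

Lemma measurable_fun_comp_affine (a b : R) (D P : set R) (h : R -> R) :
  measurable D -> P `<=` affine a b @^-1` D -> measurable_fun D h ->
  measurable_fun P (h \o affine a b).
Proof.
move=> mD PD mh; apply: (measurable_comp mD _ mh); first by move=> _ [x /PD + <-].
by apply: measurable_funTS; exact: measurable_affine.
Qed.

Lemma ge0_integral_affine (a b : R) (D : set R) (h : R -> R) : a != 0 ->
  measurable D -> measurable_fun D h -> (forall y, D y -> 0 <= h y) ->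
  (\int[mu]_(x in affine a b @^-1` D) (`|a| * h (affine a b x))%:E =
   \int[mu]_(y in D) (h y)%:E)%E.
Proof.
move=> a0 mD mh h0.
have mhaff : measurable_fun (affine a b @^-1` D) (h \o affine a b) :=
  measurable_fun_comp_affine mD (@subset_refl _ _) mh.
have inva_ge0 : 0 <= `|a|^-1 by rewrite invr_ge0.
under eq_integral do rewrite EFinM.
rewrite ge0_integralZl //; [|exact: measurable_affine_preimage|
  exact/measurable_EFinP|by move=> x /= Dx; rewrite lee_fin h0].
rewrite -[X in (_ * X)%E](@ge0_integral_pushforward _ _ _ _ R _
  (measurable_affine a b) mu D (EFin \o h) mD); first last.
- by move=> y /set_mem Dy; rewrite lee_fin h0.
- exact/measurable_EFinP.
rewrite (eq_measure_integral (mscale (NngNum inva_ge0) mu));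
  [|exact: measurable_affine|move=> maff A mA _]; last first.
  change (mu (affine a b @^-1` A) = ((`|a|^-1)%:E * mu A)%E).
  exact: lebesgue_measure_affine.
rewrite ge0_integral_mscale //=; last exact/measurable_EFinP.
by rewrite muleA -EFinM mulfV ?normr_eq0 // mul1e.
Qed.

End AffineChangeOfVariables.

Section L1Facts.
Context {R : realType}.
Local Notation mu := (@lebesgue_measure R).
Local Notation I01 := (@I01 R).

Lemma measurable_I01 : measurable (I01 : set (measurableTypeR R)).
Proof. exact: measurable_itv. Qed.

Lemma inL1_measurable (f : R -> R) : inL1 f -> measurable_fun I01 f.
Proof. by move=> /integrableP[/measurable_EFinP]. Qed.

Lemma aeqW (f g : R -> R) : f =1 g -> aeq f g.
Proof. by move=> fg; apply: aeW => x _; exact: fg. Qed.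

Lemma aeq_integral_abs (f g : R -> R) :
  measurable_fun I01 f -> measurable_fun I01 g ->
  aeq f g <-> (\int[mu]_(x in I01) (`|f x - g x|)%:E = 0)%E.
Proof.
move=> mf mg.
have ae_filter : Filter (nbhs (almost_everywhere mu)) :=
  ae_filter_ringOfSetsType mu.
have mfg : measurable_fun I01 (EFin \o (f \- g)).
  by apply/measurable_EFinP; exact: measurable_funB.
split => [fg|/(ae_eq_integral_abs mu measurable_I01 mfg) fg0].
- apply/(ae_eq_integral_abs mu measurable_I01 mfg).
  by apply: filterS fg => x fg Ix; rewrite /= fg // subrr.
- apply: filterS fg0 => x fg0 Ix; apply/eqP; rewrite -subr_eq0.
  by have [->] := fg0 Ix.
Qed.

Lemma inL1_cst (k : R) : inL1 (fun _ => k).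
Proof.
apply/integrableP; split; first exact/measurable_EFinP.
rewrite (eq_integral (cst `|k|%:E)) // integral_cst; last exact: measurable_I01.
change (`|k|%:E * mu `[0%R, 1%R] < +oo)%E.
by rewrite lebesgue_measure_itv /= lte_fin ltr01 oppr0 adde0 -EFinM ltry.
Qed.

Lemma inL1_midpoint (f g : R -> R) :
  inL1 f -> inL1 g -> inL1 (fun t => (f t + g t) / 2).
Proof.
move=> fi gi.
have := integrableZl measurable_I01 2^-1 (integrableD measurable_I01 fi gi).
apply: (@eq_integrable _ _ _ mu _ measurable_I01) => x _.
by rewrite /= -EFinD -EFinM mulrC.
Qed.

Lemma aeq_except_point (c : R) (f g : R -> R) :
  (forall x, x != c -> f x = g x) -> aeq f g.
Proof.
move=> fg; exists [set c]; split; [exact: measurable_set1|exact: lebesgue_measure_set1|].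
by move=> x /= nfg; apply: contrapT => /eqP xc; apply: nfg => _; exact: fg.
Qed.

Lemma not_aeq (A : set R) (f g : R -> R) : measurable A -> A `<=` I01 ->
  (0 < mu A)%E -> (forall x, A x -> f x != g x) -> ~ aeq f g.
Proof.
move=> mA AI muA fg [N [mN N0 fgN]].
suff : (mu A <= mu N)%E by rewrite N0 leNgt muA.
apply: le_measure; rewrite ?inE //.
move=> x Ax; apply: fgN => /(_ (AI x Ax)); exact/eqP/fg.
Qed.

Lemma I01_split (u : R) : 0 <= u <= 1 -> I01 = `[0, u[ `|` `[u, 1].
Proof.
move=> /andP[u0 u1]; apply/seteqP; split => x; rewrite /Defs.I01 /= !in_itv /=.
  by move=> /andP[x0 x1]; have [xu|ux] := ltP x u; [left|right]; apply/andP.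
by case=> /andP[x0 x1]; apply/andP; split; lra.
Qed.

Lemma ge0_integral_I01_split (u : R) (f : R -> \bar R) : 0 <= u <= 1 ->
  measurable_fun I01 f -> (forall x, I01 x -> 0 <= f x)%E ->
  (\int[mu]_(x in I01) f x =
   \int[mu]_(x in `[0%R, u[) f x + \int[mu]_(x in `[u, 1%R]) f x)%E.
Proof.
move=> u01 mf f0; have I01E := I01_split u01.
rewrite I01E ge0_integral_setU -?I01E //.
rewrite disj_set2E; apply/eqP/seteqP; split => // x [] /=; rewrite !in_itv /=.
by move=> /andP[_ xu] /andP[ux _]; lra.
Qed.

End L1Facts.

Section WeightedComposition.
Variable R : realType.
Local Notation mu := (@lebesgue_measure R).
Local Notation I01 := (@I01 R).

Definition weighted_comp (w s : R -> R) : op R := fun f x => w x * f (s x).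

Record integral_preserving (w s : R -> R) : Prop := {
  weight_ge0 : forall x, 0 <= w x;
  measurable_weighted_comp : forall h : R -> R, measurable_fun I01 h ->
    measurable_fun I01 (fun x => w x * h (s x));
  integral_weighted_comp : forall h : R -> R, measurable_fun I01 h ->
    (forall x, I01 x -> 0 <= h x) ->
    (\int[mu]_(x in I01) (w x * h (s x))%:E = \int[mu]_(x in I01) (h x)%:E)%E }.

Lemma weighted_comp_cancel (w s w' s' : R -> R) :
  (forall x, w x * w' (s x) = 1) -> (forall x, s' (s x) = x) ->
  forall f x, weighted_comp w s (weighted_comp w' s' f) x = f x.
Proof. by move=> ww' ss' f x; rewrite /weighted_comp mulrA ww' mul1r ss'. Qed.

Lemma integral_preserving_lattice_isometry (w s : R -> R) :
  integral_preserving w s -> lattice_isometry (weighted_comp w s).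
Proof.
move=> [w_ge0 mT intT].
have absT f x : `|weighted_comp w s f x| = weighted_comp w s (fun y => `|f y|) x.
  by rewrite /weighted_comp normrM ger0_norm.
have normT f : measurable_fun I01 f ->
    (\int[mu]_(x in I01) `|weighted_comp w s f x|%:E =
     \int[mu]_(x in I01) `|f x|%:E)%E.
  move=> mf; under eq_integral do rewrite absT.
  by apply: intT => //; exact: measurableT_comp.
have inL1T f : inL1 f -> inL1 (weighted_comp w s f).
  move=> fi; have mf := inL1_measurable fi.
  apply/integrableP; split; first by apply/measurable_EFinP; exact: mT.
  by rewrite normT //; case/integrableP: fi.
split; first split.
- exact: inL1T.
- move=> f g /inL1_measurable mf /inL1_measurable mg.
  rewrite !aeq_integral_abs //; try exact: mT.
  have subT x : weighted_comp w s f x - weighted_comp w s g x =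
                weighted_comp w s (f \- g) x by rewrite /weighted_comp mulrBr.
  under [X in _ -> X = _]eq_integral do rewrite subT.
  by rewrite normT //; exact: measurable_funB.
- by move=> f g _ _; apply: aeqW => x; rewrite /weighted_comp mulrDr.
- by move=> a f _; apply: aeqW => x; rewrite /weighted_comp mulrCA.
- by move=> f /inL1_measurable mf; rewrite /L1norm normT.
- by move=> f _; apply: aeqW => x; rewrite absT.
Qed.

Lemma integral_preserving_reflection :
  integral_preserving (fun _ => 1) (fun x => 1 - x).
Proof.
have affineE (x : R) : affine (-1) 1 x = 1 - x by rewrite /affine mulN1r addrC.
have I01E : I01 = affine (-1) 1 @^-1` I01.
  apply/seteqP; split => x; rewrite /Defs.I01 /= ?affineE !in_itv /=;
    move=> /andP[x0 x1]; apply/andP; split; lra.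
split=> [_|h mh|h mh h0]; first exact: ler01.
- apply: measurable_funM => //.
  have I01_sub : I01 `<=` affine (-1) 1 @^-1` I01 by rewrite -I01E.
  have := measurable_fun_comp_affine measurable_I01 I01_sub mh.
  by apply: eq_measurable_fun => x _ /=; rewrite affineE.
- rewrite -(ge0_integral_affine (a := -1) 1 _ measurable_I01 mh h0);
    last by rewrite oppr_eq0 oner_eq0.
  rewrite -I01E; apply: eq_integral => x _.
  by rewrite normrN normr1 affineE.
Qed.

Section TwoPieces.
Variables (s0 t0 a1 b1 a2 b2 : R).
Hypotheses (s01 : 0 <= s0 <= 1) (t01 : 0 <= t0 <= 1).
Hypotheses (a1_gt0 : 0 < a1) (a2_gt0 : 0 < a2).
Hypothesis piece1 : `[0, s0[%classic = affine a1 b1 @^-1` `[0, t0[.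
Hypothesis piece2 : `[s0, 1]%classic = affine a2 b2 @^-1` `[t0, 1].

Let lt_s0 x : `[0, s0[%classic x -> x < s0.
Proof. by rewrite /= in_itv /= => /andP[]. Qed.

Let ge_s0 x : `[s0, 1]%classic x -> (x < s0) = false.
Proof. by rewrite /= in_itv /= => /andP[+ _]; rewrite leNgt => /negbTE. Qed.

Let t0_pieces_I01 : `[0, t0[%classic `<=` I01 /\ `[t0, 1]%classic `<=` I01.
Proof. by rewrite (I01_split t01); split => x Px; [left|right]. Qed.

Lemma measurable_two_pieces (h : R -> R) : measurable_fun I01 h ->
  measurable_fun I01 (fun x =>
    (if x < s0 then a1 else a2) *
    h (if x < s0 then affine a1 b1 x else affine a2 b2 x)).
Proof.
have [sub1 sub2] := t0_pieces_I01.
move=> mh; rewrite (I01_split s01) measurable_funU //; split.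
- apply: (eq_measurable_fun (fun x => a1 * h (affine a1 b1 x))).
    by move=> x /set_mem /lt_s0 ->.
  apply: measurable_funM => //.
  apply: (measurable_fun_comp_affine (measurable_itv _) _
    (measurable_funS measurable_I01 sub1 mh)).
  by rewrite -piece1.
- apply: (eq_measurable_fun (fun x => a2 * h (affine a2 b2 x))).
    by move=> x /set_mem /ge_s0 ->.
  apply: measurable_funM => //.
  apply: (measurable_fun_comp_affine (measurable_itv _) _
    (measurable_funS measurable_I01 sub2 mh)).
  by rewrite -piece2.
Qed.

Lemma integral_preserving_two_pieces :
  integral_preserving (fun x => if x < s0 then a1 else a2)
    (fun x => if x < s0 then affine a1 b1 x else affine a2 b2 x).
Proof.
have [sub1 sub2] := t0_pieces_I01.
split=> [x|h|h mh h0]; [by case: ifP => _; exact: ltW|exact: measurable_two_pieces|].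
have [mh1 mh2] : measurable_fun `[0, t0[ h /\ measurable_fun `[t0, 1] h.
  by split; exact: measurable_funS measurable_I01 _ mh.
rewrite (ge0_integral_I01_split s01); first last.
- move=> x; rewrite (I01_split s01) lee_fin => -[Px|Px].
  + rewrite lt_s0 //; apply: mulr_ge0; [exact: ltW|apply/h0/sub1].
    by move: Px; rewrite piece1.
  + rewrite ge_s0 //; apply: mulr_ge0; [exact: ltW|apply/h0/sub2].
    by move: Px; rewrite piece2.
- by apply/measurable_EFinP; exact: measurable_two_pieces.
under eq_integral => x /set_mem Px do
  rewrite (lt_s0 Px) -[a1 in a1 * _]gtr0_norm //.
under [X in (_ + X)%E]eq_integral => x /set_mem Px do
  rewrite (ge_s0 Px) -[a2 in a2 * _]gtr0_norm //.
rewrite piece1 piece2 !ge0_integral_affine ?gt_eqF //; first last.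
- by move=> y /sub1; exact: h0.
- by move=> y /sub2; exact: h0.
by rewrite (ge0_integral_I01_split t01) //; first exact/measurable_EFinP.
Qed.

End TwoPieces.

End WeightedComposition.

Section NoStrictlyConvexNorm.
Context {R : realType}.

Lemma inL1_act_word (ops : letter -> op R) (w : seq letter) (f : R -> R) :
  (forall l, L1_linear (ops l)) -> inL1 f -> inL1 (act_word ops w f).
Proof.
move=> lin fi; elim: w => [|l w IHw] //=.
by case: (lin l) => inL1_ops _ _ _; exact: inL1_ops.
Qed.

Lemma no_invariant_strictly_convex_norm (ops : letter -> op R)
    (w1 w2 : seq letter) (f : R -> R) :
  (forall l, L1_linear (ops l)) -> inL1 f ->
  ~ aeq (act_word ops w1 f) (act_word ops w2 f) ->
  aeq (fun t => (act_word ops w1 f t + act_word ops w2 f t) / 2) f ->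
  ~ exists N, [/\ equivalent_norm N, strictly_convex N & invariant_norm ops N].
Proof.
move=> lin fi neq12 mid12 [N [[N_aeq _ _ _ _] N_strict N_inv]].
have fi1 := inL1_act_word w1 lin fi; have fi2 := inL1_act_word w2 lin fi.
have := N_strict _ _ fi1 fi2 neq12 (etrans (N_inv w1 f fi) (esym (N_inv w2 f fi))).
by rewrite (N_aeq _ _ (inL1_midpoint fi1 fi2) fi mid12) N_inv // ltxx.
Qed.

End NoStrictlyConvexNorm.

Section F2Action.
Variable R : realType.

Definition op_a : op R := weighted_comp (fun _ => 1) (fun x => 1 - x).

Definition op_b : op R := weighted_comp
  (fun x => if x < 2^-1 then 2^-1 else 3 / 2)
  (fun x => if x < 2^-1 then affine 2^-1 0 x else affine (3 / 2) (- 2^-1) x).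

Definition op_b_inv : op R := weighted_comp
  (fun x => if x < 4^-1 then 2 else 2 / 3)
  (fun x => if x < 4^-1 then affine 2 0 x else affine (2 / 3) 3^-1 x).

Definition F2_ops (l : letter) : op R :=
  match l with La | La_inv => op_a | Lb => op_b | Lb_inv => op_b_inv end.

Lemma op_aK : L1_inverse op_a op_a.
Proof.
by split=> f _; apply: aeqW; apply: weighted_comp_cancel => x; rewrite ?mulr1 ?subKr.
Qed.

Lemma op_bK : L1_inverse op_b op_b_inv.
Proof.
split=> f _; apply: aeqW; apply: weighted_comp_cancel => x; rewrite /affine;
  by case: (ltP x) => x1; case: ltP => x2; lra.
Qed.

Lemma F2_ops_action : F2_lattice_isometric_action F2_ops.
Proof.
split; [case|exact: op_aK|exact: op_bK]; apply: integral_preserving_lattice_isometry;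
  [exact: integral_preserving_reflection|exact: integral_preserving_reflection|
   apply: (integral_preserving_two_pieces (t0 := 4^-1))|
   apply: (integral_preserving_two_pieces (t0 := 2^-1))].
1-4, 7-10: lra.
all: apply/seteqP; split=> x; rewrite /affine /= !in_itv /= => /andP[? ?].
all: apply/andP; split; lra.
Qed.

Lemma op_b_one_neq : ~ aeq (op_b (fun _ => 1)) (op_a (op_b (fun _ => 1))).
Proof.
apply: (@not_aeq _ `[0, 2^-1[) => [|||x].
- exact: measurable_itv.
- by move=> x; rewrite /Defs.I01 /= !in_itv /= => /andP[? ?]; apply/andP; split; lra.
- by rewrite lebesgue_measure_itv /= lte_fin ifT ?sube0 ?lte_fin; lra.
- rewrite /= in_itv /= => /andP[x0 x1].
  rewrite /op_a /op_b /weighted_comp !mulr1 mul1r x1 ifF;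
    last by apply/negbTE; rewrite -leNgt; lra.
  by apply/eqP; lra.
Qed.

Lemma op_b_one_midpoint :
  aeq (fun t => (op_b (fun _ => 1) t + op_a (op_b (fun _ => 1)) t) / 2) (fun _ => 1).
Proof.
apply: (aeq_except_point (c := 2^-1)) => x; rewrite neq_lt => /orP[x_lt|x_gt];
  rewrite /op_a /op_b /weighted_comp !mulr1 mul1r.
- by rewrite x_lt ifF; [lra|apply/negbTE; rewrite -leNgt; lra].
- by rewrite ifF ?ifT; [lra|lra|apply/negbTE; rewrite -leNgt; lra].
Qed.

End F2Action.

Theorem proposition5p1 (R : realType) :
  exists ops : letter -> op R,
    F2_lattice_isometric_action ops /\
    ~ (exists N : (R -> R) -> R,
         [/\ equivalent_norm N, strictly_convex N & invariant_norm ops N]).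
Proof.
exists (@F2_ops R); split; first exact: F2_ops_action.
have [iso _ _] := @F2_ops_action R.
have lin l : L1_linear (@F2_ops R l) by have [] := iso l.
apply: (no_invariant_strictly_convex_norm (w1 := [:: Lb]) (w2 := [:: La; Lb])
  lin (inL1_cst 1)).
- exact: op_b_one_neq.
- exact: op_b_one_midpoint.
Qed.
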